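(* Let $(\mathbb{X},\dagger)$ be a Moore-Penrose dagger additive category, and let $\begin{bmatrix}\alpha&\beta\\ \beta^\dagger&\delta\end{bmatrix}:B\oplus C\to B\oplus C$ be a $\dagger$-positive map. Then a map $m:B\to C$ is a conditional generator of this $\dagger$-positive map if and only if $m\circ\alpha=\beta^\dagger$.
   Context: A dagger additive category is a dagger category (contravariant identity-on-objects involutive functor $\dagger$) whose hom-sets are abelian groups with bilinear composition and additive $\dagger$, having a zero object and finite biproducts whose projections $\pi_j$ and injections $\iota_j$ satisfy $\pi_j^\dagger=\iota_j$. Maps between biproducts are written as matrices; composition is matrix multiplication and $\dagger$ is transpose with entrywise $\dagger$. An endomorphism $p$ is $\dagger$-positive if $p=\phi^\dagger\circ\phi$ for some map $\phi$. A Moore-Penrose inverse of $f:A\to B$ is a map $f^\circ:B\to A$ with $f f^\circ f=f$, $f^\circ f f^\circ=f^\circ$, $(f f^\circ)^\dagger=f f^\circ$, $(f^\circ f)^\dagger=f^\circ f$; a Moore-Penrose dagger additive category is one in which every map has a Moore-Penrose inverse. A conditional generator for a $\dagger$-positive map $\begin{bmatrix}\alpha&\beta\\ \beta^\dagger&\delta\end{bmatrix}:B\oplus C\to B\oplus C$ (with $\alpha:B\to B$, $\beta:C\to B$, $\delta:C\to C$) is a map $m:B\to C$ with (i) $m\circ\alpha=\beta^\dagger$ and (ii) $\delta-m\circ\beta$ is $\dagger$-positive. *)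

From HB Require Import structures.
From mathcomp Require Import all_boot all_algebra.
Set Implicit Arguments. Unset Strict Implicit. Unset Printing Implicit Defensive.
Import GRing.Theory.
Local Open Scope ring_scope.

Record DaggerAdditiveCat := {
  ob : Type;
  dhom : ob -> ob -> zmodType;
  dcomp : forall A B C : ob, dhom B C -> dhom A B -> dhom A C;
  idm : forall A : ob, dhom A A;
  dag : forall A B : ob, dhom A B -> dhom B A;
  compA : forall (A B C D : ob) (h : dhom C D) (g : dhom B C) (f : dhom A B),
      dcomp h (dcomp g f) = dcomp (dcomp h g) f;
  comp_idl : forall (A B : ob) (f : dhom A B), dcomp (idm B) f = f;
  comp_idr : forall (A B : ob) (f : dhom A B), dcomp f (idm A) = f;
  dag_comp : forall (A B C : ob) (g : dhom B C) (f : dhom A B),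
      dag (dcomp g f) = dcomp (dag f) (dag g);
  dag_id : forall A : ob, dag (idm A) = idm A;
  dagK : forall (A B : ob) (f : dhom A B), dag (dag f) = f;
  compDl : forall (A B C : ob) (g g' : dhom B C) (f : dhom A B),
      dcomp (g + g') f = dcomp g f + dcomp g' f;
  compDr : forall (A B C : ob) (g : dhom B C) (f f' : dhom A B),
      dcomp g (f + f') = dcomp g f + dcomp g f';
  dagD : forall (A B : ob) (f f' : dhom A B), dag (f + f') = dag f + dag f';
  zob : ob;
  zob_initial : forall (A : ob) (f g : dhom zob A), f = g;
  zob_terminal : forall (A : ob) (f g : dhom A zob), f = g;
  bip : ob -> ob -> ob;
  pi1 : forall A B : ob, dhom (bip A B) A;
  pi2 : forall A B : ob, dhom (bip A B) B;
  io1 : forall A B : ob, dhom A (bip A B);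
  io2 : forall A B : ob, dhom B (bip A B);
  pi1io1 : forall A B : ob, dcomp (pi1 A B) (io1 A B) = idm A;
  pi2io2 : forall A B : ob, dcomp (pi2 A B) (io2 A B) = idm B;
  pi1io2 : forall A B : ob, dcomp (pi1 A B) (io2 A B) = 0;
  pi2io1 : forall A B : ob, dcomp (pi2 A B) (io1 A B) = 0;
  bip_id : forall A B : ob,
      dcomp (io1 A B) (pi1 A B) + dcomp (io2 A B) (pi2 A B) = idm (bip A B);
  dag_pi1 : forall A B : ob, dag (pi1 A B) = io1 A B;
  dag_pi2 : forall A B : ob, dag (pi2 A B) = io2 A B
}.

Arguments dcomp {d A B C}.
Arguments idm {d}.
Arguments dag {d A B}.
Arguments bip {d}.
Arguments pi1 {d A B}.
Arguments pi2 {d A B}.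
Arguments io1 {d A B}.
Arguments io2 {d A B}.

Definition dagger_positive (X : DaggerAdditiveCat) (A : ob X) (p : dhom A A) : Prop :=
  exists (D : ob X) (phi : dhom A D), p = dcomp (dag phi) phi.

Definition is_MP_inverse (X : DaggerAdditiveCat) (A B : ob X)
    (f : dhom A B) (g : dhom B A) : Prop :=
  [/\ dcomp f (dcomp g f) = f,
      dcomp g (dcomp f g) = g,
      dag (dcomp f g) = dcomp f g
    & dag (dcomp g f) = dcomp g f].

Definition MoorePenrose (X : DaggerAdditiveCat) : Prop :=
  forall (A B : ob X) (f : dhom A B), exists g : dhom B A, is_MP_inverse f g.

(* The 2x2 matrix [[a, b], [c, d]] : A (+) B -> A' (+) B', i.e.
   io1 a pi1 + io1 b pi2 + io2 c pi1 + io2 d pi2. *)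
Definition mat2 (X : DaggerAdditiveCat) (A B A' B' : ob X)
    (a : dhom A A') (b : dhom B A') (c : dhom A B') (d : dhom B B')
    : dhom (bip A B) (bip A' B') :=
  dcomp io1 (dcomp a pi1) + dcomp io1 (dcomp b pi2)
  + dcomp io2 (dcomp c pi1) + dcomp io2 (dcomp d pi2).

(* Conditional generator of [[alpha, beta], [beta^dagger, delta]]. *)
Definition conditional_generator (X : DaggerAdditiveCat) (B C : ob X)
    (alpha : dhom B B) (beta : dhom C B) (delta : dhom C C) (m : dhom B C) : Prop :=
  dcomp m alpha = dag beta /\ dagger_positive (delta - dcomp m beta).

(* Write the positive matrix as phi^dagger phi and put p1 = phi io1,
   p2 = phi io2, so that alpha = p1^dagger p1, beta = p1^dagger p2 and
   delta = p2^dagger p2.  If m alpha = beta^dagger, expanding shows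
   delta - m beta = (p2 - p1 m^dagger)^dagger (p2 - p1 m^dagger), so condition
   (ii) of a conditional generator follows from (i). *)
From Pilot Require Import Defs.
From HB Require Import structures.
From mathcomp Require Import all_boot all_algebra.
Set Implicit Arguments. Unset Strict Implicit. Unset Printing Implicit Defensive.
Local Open Scope ring_scope.
Import GRing.Theory.

Section DaggerAdditive.
Variable X : DaggerAdditiveCat.

Lemma comp0r (A B C : ob X) (g : dhom B C) : dcomp g (0 : dhom A B) = 0.
Proof.
apply: (addrI (dcomp g 0)); by rewrite -compDr !addr0.
Qed.

Lemma comp0l (A B C : ob X) (f : dhom A B) : dcomp (0 : dhom B C) f = 0.
Proof.
apply: (addrI (dcomp 0 f)); by rewrite -compDl !addr0.
Qed.

Lemma compNr (A B C : ob X) (g : dhom B C) (f : dhom A B) :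
  dcomp g (- f) = - dcomp g f.
Proof. by apply/eqP; rewrite -subr_eq0 opprK -compDr addNr comp0r. Qed.

Lemma compNl (A B C : ob X) (g : dhom B C) (f : dhom A B) :
  dcomp (- g) f = - dcomp g f.
Proof. by apply/eqP; rewrite -subr_eq0 opprK -compDl addNr comp0l. Qed.

Lemma dag0 (A B : ob X) : dag (0 : dhom A B) = 0.
Proof.
apply: (addrI (dag (0 : dhom A B))); by rewrite -dagD !addr0.
Qed.

Lemma dagN (A B : ob X) (f : dhom A B) : dag (- f) = - dag f.
Proof. by apply/eqP; rewrite -subr_eq0 opprK -dagD addNr dag0. Qed.

Lemma dag_io1 (A B : ob X) : dag (@io1 X A B) = pi1.
Proof. by rewrite -dag_pi1 dagK. Qed.

Lemma dag_io2 (A B : ob X) : dag (@io2 X A B) = pi2.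
Proof. by rewrite -dag_pi2 dagK. Qed.

Lemma mat2_blocks (A B A' B' : ob X)
    (a : dhom A A') (b : dhom B A') (c : dhom A B') (d : dhom B B') :
  [/\ dcomp pi1 (dcomp (mat2 a b c d) io1) = a,
      dcomp pi1 (dcomp (mat2 a b c d) io2) = b,
      dcomp pi2 (dcomp (mat2 a b c d) io1) = c
    & dcomp pi2 (dcomp (mat2 a b c d) io2) = d].
Proof.
rewrite /mat2 !compDl !compDr -!Defs.compA.
rewrite !pi1io1 !pi1io2 !pi2io1 !pi2io2 !comp0r !comp_idr.
rewrite !Defs.compA !pi1io1 !pi1io2 !pi2io1 !pi2io2 !comp0l !comp_idl.
by rewrite !addr0 !add0r.
Qed.

Lemma gram_comp (A D U V : ob X) (phi : dhom A D) (p : dhom U A) (q : dhom V A) :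
  dcomp (dag p) (dcomp (dcomp (dag phi) phi) q)
  = dcomp (dag (dcomp phi p)) (dcomp phi q).
Proof. by rewrite dag_comp -!Defs.compA. Qed.

Lemma dagger_positive_schur (B C D : ob X)
    (p1 : dhom B D) (p2 : dhom C D) (m : dhom B C) :
  dcomp m (dcomp (dag p1) p1) = dcomp (dag p2) p1 ->
  dagger_positive (dcomp (dag p2) p2 - dcomp m (dcomp (dag p1) p2)).
Proof.
move=> hm; exists D, (p2 - dcomp p1 (dag m)).
have cross : dcomp (dcomp m (dag p1)) (dcomp p1 (dag m))
             = dcomp (dag p2) (dcomp p1 (dag m)).
  by rewrite -Defs.compA (Defs.compA (dag p1)) Defs.compA hm -Defs.compA.
rewrite dagD dagN dag_comp dagK !compDl !compDr !compNl !compNr opprK cross.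
by rewrite Defs.compA addrACA addNr addr0.
Qed.

End DaggerAdditive.

Theorem mainTheorem9 (X : DaggerAdditiveCat) (hMP : MoorePenrose X)
    (B C : ob X) (alpha : dhom B B) (beta : dhom C B) (delta : dhom C C)
    (hpos : dagger_positive (mat2 alpha beta (dag beta) delta))
    (m : dhom B C) :
  conditional_generator alpha beta delta m <-> dcomp m alpha = dag beta.
Proof.
split; first by case.
move=> hm; split => //.
case: hpos => D [phi hphi].
have [ha hb _ hd] := mat2_blocks alpha beta (dag beta) delta.
rewrite hphi -dag_io1 -dag_io2 !gram_comp in ha hb hd.
rewrite -ha -hb in hm; rewrite -hb -hd.
by apply: dagger_positive_schur; rewrite hm dag_comp dagK.
Qed.
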